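(* Consider the network with vertices $s_1,s_2,s_3,t$ and directed edges $(s_3,s_1),(s_3,s_2),(s_1,t),(s_2,t)$, where $\mathcal{A}=\mathcal{Z}=\{0,1\}$, the messages $X_1^k,X_2^k,X_3^k$ have all components i.i.d. uniform on $\{0,1\}$, and the demand function is $f(X_1,X_2,X_3)=X_1+X_2+X_3$ over $GF(2)$. Then every admissible rate tuple $(R_{31},R_{32},R_1,R_2)$ satisfies $R_{31}+R_{32}\ge1$, $R_1\ge1$, $R_2\ge1$ (and hence $(R_1+R_2)/2\ge1$). Conversely, for every positive integer $k$ and every integer $0\le c\le k$, the rate tuple $(c/k,\,1-c/k,\,1,\,1)$ is achieved by a zero-error source-network code; hence these lower bounds are tight.
   Context: A source-network code $\mathcal{C}_{f,k}$ consists of encoders $\phi_{(s_3,s_1)},\phi_{(s_3,s_2)}:\mathcal{A}^k\to\mathcal{Z}^*$, $\phi_{(s_1,t)},\phi_{(s_2,t)}:\mathcal{A}^k\times\mathcal{Z}^*\to\mathcal{Z}^*$ ($\mathcal{Z}^*$ = finite binary sequences) and a decoder $\psi_t:\mathcal{Z}^*\times\mathcal{Z}^*\to\{0,1\}^k$; $\mathbf{Z}_{31}=\phi_{(s_3,s_1)}(X_3^k)$, $\mathbf{Z}_{32}=\phi_{(s_3,s_2)}(X_3^k)$, $\mathbf{Z}_1=\phi_{(s_1,t)}(X_1^k,\mathbf{Z}_{31})$, $\mathbf{Z}_2=\phi_{(s_2,t)}(X_2^k,\mathbf{Z}_{32})$, and $\Pr\{\psi_t(\mathbf{Z}_1,\mathbf{Z}_2)\ne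 f(X_1^k,X_2^k,X_3^k)\}=0$, where $f$ is applied componentwise. A tuple $(R_{31},R_{32},R_1,R_2)$ is admissible if for every $\epsilon>0$ there exist a sufficiently large $k$ and such a code with $\log|\mathcal{Z}|\,\mathbb{E}\ell(\mathbf{Z}_e)\le k\log|\mathcal{A}|(R_e+\epsilon)$ for each $e\in\{31,32,1,2\}$, $\ell$ denoting length in symbols. A code achieves rate tuple $(r_{31},r_{32},r_1,r_2)$ if $\mathbb{E}\ell(\mathbf{Z}_e)=k r_e$ for each $e$ (here $|\mathcal{A}|=|\mathcal{Z}|=2$). *)

From HB Require Import structures.
From mathcomp Require Import all_boot all_order all_algebra.
From mathcomp Require Import reals.
Set Implicit Arguments. Unset Strict Implicit. Unset Printing Implicit Defensive.
Import Order.TTheory GRing.Theory Num.Theory.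
Local Open Scope ring_scope.

(* Alphabets A = Z = {0,1} are modelled by bool; GF(2) addition is addb (+).
   A block of k source symbols is a k.-tuple bool; Z^* (finite binary
   sequences) is seq bool, and the length l(.) is size. *)

Record snCode (k : nat) := SNCode {
  enc31 : k.-tuple bool -> seq bool;
  enc32 : k.-tuple bool -> seq bool;
  enc1  : k.-tuple bool -> seq bool -> seq bool;
  enc2  : k.-tuple bool -> seq bool -> seq bool;
  dec   : seq bool -> seq bool -> k.-tuple bool
}.

Definition outcome (k : nat) := (k.-tuple bool * k.-tuple bool * k.-tuple bool)%type.

Definition Z31 k (C : snCode k) (x : outcome k) : seq bool := enc31 C x.2.
Definition Z32 k (C : snCode k) (x : outcome k) : seq bool := enc32 C x.2.
Definition Z1 k (C : snCode k) (x : outcome k) : seq bool := enc1 C x.1.1 (Z31 C x).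
Definition Z2 k (C : snCode k) (x : outcome k) : seq bool := enc2 C x.1.2 (Z32 C x).

Definition fsum k (x : outcome k) : k.-tuple bool :=
  [tuple tnth x.1.1 i (+) tnth x.1.2 i (+) tnth x.2 i | i < k].

(* All components i.i.d. uniform on {0,1}: the law of the outcome is the
   uniform distribution on outcome k. *)
Definition Pr {R : realType} k (E : pred (outcome k)) : R :=
  #|[set x : outcome k | E x]|%:R / #|{: outcome k}|%:R.

Definition Expect {R : realType} k (g : outcome k -> nat) : R :=
  (\sum_(x : outcome k) (g x)%:R) / #|{: outcome k}|%:R.

Definition zero_error (R : realType) k (C : snCode k) : Prop :=
  Pr (R := R) (fun x => dec C (Z1 C x) (Z2 C x) != fsum x) = 0.

Definition EL31 (R : realType) k (C : snCode k) : R := Expect (fun x => size (Z31 C x)).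
Definition EL32 (R : realType) k (C : snCode k) : R := Expect (fun x => size (Z32 C x)).
Definition EL1  (R : realType) k (C : snCode k) : R := Expect (fun x => size (Z1 C x)).
Definition EL2  (R : realType) k (C : snCode k) : R := Expect (fun x => size (Z2 C x)).

(* Here |A| = |Z| = 2, so the factors log|Z| and log|A|
   coincide and cancel: the condition reads E l(Z_e) <= k (R_e + eps).
   "there exist a sufficiently large k" is read (as in Yeung's framework)
   as: for all sufficiently large k such a code exists. *)
Definition admissible (R : realType) (R31 R32 R1 R2 : R) : Prop :=
  forall eps : R, 0 < eps ->
  exists K : nat, forall k : nat, (K <= k)%N ->
  exists C : snCode k,
    [/\ zero_error R C,
        EL31 R C <= k%:R * (R31 + eps),
        EL32 R C <= k%:R * (R32 + eps),
        EL1 R C <= k%:R * (R1 + eps) &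
        EL2 R C <= k%:R * (R2 + eps)].

Definition achieves (R : realType) k (C : snCode k) (r31 r32 r1 r2 : R) : Prop :=
  [/\ EL31 R C = k%:R * r31, EL32 R C = k%:R * r32,
      EL1 R C = k%:R * r1 & EL2 R C = k%:R * r2].

From HB Require Import structures.
From mathcomp Require Import all_boot all_order all_algebra.
From mathcomp Require Import reals.
From mathcomp Require Import zify ring lra.

Set Implicit Arguments.
Unset Strict Implicit.
Unset Printing Implicit Defensive.

Import Order.TTheory GRing.Theory Num.Theory.

(* Converse: take the cut {(s3,s1),(s3,s2)}, {(s1,t)} or {(s2,t)}.  Since t
   recovers X1 + X2 + X3 without error, the messages crossing the cut and the
   two sources on t's side of it determine the remaining source, so they map
   its 2^k values injectively into pairs of binary strings.  Fewer than
   (m+1)^2 2^m pairs have total length below m; for k = 2^j and m = k - 3j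
   this is at most 2^k / m, so the expected length across the cut is at least
   m - 1 = k - O(log k) and the rate of the cut is at least 1.
   Achievability: s3 sends the first c bits of X3 to s1 and the other k - c
   to s2; each s_i forwards X_i masked with its share, and t adds the two. *)

Lemma markov_sum_nat (T : finType) (w : T -> nat) (m : nat) :
  (m * #|[set x | m <= w x]| <= \sum_x w x)%N.
Proof.
rewrite mulnC -sum_nat_const big_mkcond /=.
by apply: leq_sum => x _; rewrite inE; case: ifP.
Qed.

Lemma sqrn_lt_exp2 n : (5 <= n)%N -> (n * n < 2 ^ n)%N.
Proof.
move=> /subnK <-; elim: (n - 5)%N => [|i IHi] //.
by rewrite addSn expnS; nia.
Qed.

Lemma exists_exp2_gt (N K : nat) : exists2 j, (K <= j)%N & (N * (3 * j).+1 < 2 ^ j)%N.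
Proof.
pose j := maxn 5 (maxn (4 * N + 4) K); exists j; first by rewrite /j; lia.
have j5 : (5 <= j)%N by rewrite /j; lia.
have jN : ((4 * N + 4) * j <= j * j)%N by rewrite leq_mul2r; apply/orP; right; rewrite /j; lia.
have := sqrn_lt_exp2 j5; nia.
Qed.

Lemma exp2_budget j m : (0 < j)%N -> (m + 3 * j = 2 ^ j)%N ->
  (m * (m.+1 * m.+1 * 2 ^ m) <= 2 ^ 2 ^ j)%N.
Proof.
move=> j_gt0 mj; have m_lt : (m < 2 ^ j)%N by lia.
have -> : (2 ^ 2 ^ j = 2 ^ j * (2 ^ j * 2 ^ j) * 2 ^ m)%N.
  by rewrite -!expnD; congr (2 ^ _)%N; lia.
by rewrite mulnA leq_mul2r leq_mul ?leq_mul ?orbT // ltnW.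
Qed.

Section ShortCodewords.

Variables (T U : finType) (F : T -> U * (seq bool * seq bool)).
Hypothesis F_inj : injective F.

Lemma card_short_codewords m :
  (#|[set x | size (F x).2.1 + size (F x).2.2 < m]| <= #|U| * m.+1 * m.+1 * 2 ^ m)%N.
Proof.
set A := [set x | _].
(* a pair of total length < m is determined by its two lengths and the first
   m bits of its concatenation *)
pose G x := ((F x).1, (inord (size (F x).2.1) : 'I_m.+1),
  (inord (size (F x).2.2) : 'I_m.+1), [tuple nth false ((F x).2.1 ++ (F x).2.2) i | i < m]).
suff /card_in_imset <- : {in A &, injective G}.
  by apply: leq_trans (max_card _) _; rewrite !card_prod !card_ord card_tuple card_bool.
move=> x y; rewrite !inE /G => lt_x lt_y eqG; apply: F_inj; move: lt_x lt_y eqG.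
case: (F x) => u [a b]; case: (F y) => v [c d] /= lt_x lt_y.
case=> -> /(congr1 val) ac /(congr1 val) bd cat_eq.
rewrite /= !inordK in ac bd; try lia.
suff ab_cd : a ++ b = c ++ d.
  have := congr1 (drop (size a)) ab_cd; have := congr1 (take (size a)) ab_cd.
  by rewrite {2 4}ac !take_size_cat ?drop_size_cat // => -> ->.
apply: (@eq_from_nth _ false); first by rewrite !size_cat; lia.
move=> i; rewrite size_cat => i_lt; have i_m : (i < m)%N by lia.
have := congr1 (fun s => nth false s i) cat_eq.
by rewrite /= !(nth_map (Ordinal i_m)) -?enumT ?size_enum_ord ?nth_enum_ord.
Qed.

Lemma sum_codeword_size_ge k m : #|T| = (#|U| * 2 ^ k)%N ->
  (m * (m.+1 * m.+1 * 2 ^ m) <= 2 ^ k)%N ->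
  ((m - 1) * #|T| <= \sum_x (size (F x).2.1 + size (F x).2.2))%N.
Proof.
move=> cardT budget.
pose w x := (size (F x).2.1 + size (F x).2.2)%N.
have short : (#|[set x | w x < m]| <= #|U| * m.+1 * m.+1 * 2 ^ m)%N.
  exact: card_short_codewords.
have split_T : (#|[set x | w x < m]| + #|[set x | m <= w x]|)%N = #|T|.
  have -> : [set x | m <= w x] = ~: [set x | w x < m].
    by apply/setP => x; rewrite !inE -leqNgt.
  exact: cardsC.
have few_short : (m * #|[set x | w x < m]| <= #|T|)%N.
  apply: leq_trans (leq_mul (leqnn m) short) _.
  rewrite cardT -!mulnA mulnCA leq_mul2l; apply/orP; right.
  by rewrite !mulnA in budget *.
change ((m - 1) * #|T| <= \sum_x w x)%N.
have := markov_sum_nat w m; nia.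
Qed.

End ShortCodewords.

Local Open Scope ring_scope.

Section Expectation.

Variables (R : realType) (k : nat).

Lemma card_outcome :
  #|{: outcome k}| = (#|{: k.-tuple bool * k.-tuple bool}| * 2 ^ k)%N.
Proof. by rewrite /outcome card_prod card_tuple card_bool. Qed.

Lemma card_outcome_gt0 : (0 < #|{: outcome k}|)%N.
Proof. by rewrite card_outcome !card_prod !card_tuple card_bool !muln_gt0 expn_gt0. Qed.

Lemma eq_Expect (g h : outcome k -> nat) : g =1 h -> Expect (R := R) g = Expect h.
Proof. by move=> gh; rewrite /Expect (eq_bigr _ (fun x _ => congr1 _ (gh x))). Qed.

Lemma ExpectD (g h : outcome k -> nat) :
  Expect (R := R) (fun x => g x + h x)%N = Expect g + Expect h.
Proof.
by rewrite /Expect -mulrDl -big_split; congr (_ / _); apply: eq_bigr => x _; rewrite natrD.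
Qed.

Lemma Expect_eq_const (g : outcome k -> nat) n :
  (forall x, g x = n) -> Expect (R := R) g = n%:R.
Proof.
move=> gn; rewrite (eq_Expect gn) /Expect sumr_const -[X in X / _]mulr_natr mulfK //.
by rewrite pnatr_eq0 -lt0n card_outcome_gt0.
Qed.

Lemma Expect_ge_sum (g : outcome k -> nat) n :
  (n * #|{: outcome k}| <= \sum_x g x)%N -> n%:R <= Expect (R := R) g.
Proof.
by move=> le_n; rewrite /Expect -natr_sum ler_pdivlMr ?ltr0n ?card_outcome_gt0 // -natrM ler_nat.
Qed.

Lemma Expect_size2_ge m
    (F : outcome k -> (k.-tuple bool * k.-tuple bool) * (seq bool * seq bool)) :
  injective F -> (m * (m.+1 * m.+1 * 2 ^ m) <= 2 ^ k)%N ->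
  ((m - 1)%N)%:R <= Expect (R := R) (fun x => size (F x).2.1 + size (F x).2.2)%N.
Proof.
by move=> F_inj budget; apply/Expect_ge_sum/(sum_codeword_size_ge F_inj card_outcome).
Qed.

Lemma Expect_size_ge m (F : outcome k -> (k.-tuple bool * k.-tuple bool) * seq bool) :
  injective F -> (m * (m.+1 * m.+1 * 2 ^ m) <= 2 ^ k)%N ->
  ((m - 1)%N)%:R <= Expect (R := R) (fun x => size (F x).2).
Proof.
move=> F_inj budget.
have G_inj : injective (fun x => ((F x).1, ((F x).2, [::] : seq bool))).
  by move=> x y [e1 e2]; apply: F_inj; rewrite [F x]surjective_pairing e1 e2 -surjective_pairing.
by rewrite -(eq_Expect (fun x => addn0 _)); apply: Expect_size2_ge G_inj budget.
Qed.

End Expectation.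

Lemma rate_ge1 (R : realType) (S : R) (L : forall k, snCode k -> R) :
  (forall eps, 0 < eps -> exists K, forall k, (K <= k)%N ->
     exists2 C : snCode k, zero_error R C & L k C <= k%:R * (S + eps)) ->
  (forall k m (C : snCode k), zero_error R C ->
     (m * (m.+1 * m.+1 * 2 ^ m) <= 2 ^ k)%N -> ((m - 1)%N)%:R <= L k C) ->
  1 <= S.
Proof.
move=> codes_exist cut_bound; rewrite leNgt; apply/negP => S_lt1.
pose g := 1 - S; have g_gt0 : 0 < g by rewrite subr_gt0.
have [K codes] := codes_exist (g / 2) ltac:(lra).
pose N := Num.Def.archi_bound (2 / g).
have two_g_gt0 : 0 < 2 / g by rewrite divr_gt0.
have N_gt : 2 / g < N%:R by apply/archi_boundP/ltW.
have N_gt0 : (0 < N)%N by rewrite -(ltr0n R); apply: lt_trans N_gt.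
have [j K_le_j j_big] := exists_exp2_gt N (maxn 1 K).
have j_lt : (j < 2 ^ j)%N by apply: ltn_expl.
have [C C_ok C_short] := codes (2 ^ j)%N ltac:(lia).
have j_gt0 : (0 < j)%N by lia.
have split_2j : (2 ^ j - 3 * j + 3 * j = 2 ^ j)%N by nia.
have := cut_bound _ _ C C_ok (exp2_budget j_gt0 split_2j).
have -> : (2 ^ j - 3 * j - 1 = 2 ^ j - (3 * j).+1)%N by lia.
rewrite natrB; last by nia.
(* [2^j - (3j+1) <= 2^j (1 - g/2)] contradicts [N (3j+1) < 2^j] as [N > 2/g] *)
move: j_big N_gt C_short; rewrite -(ltr_nat R) natrM.
set a := (2 ^ j)%:R; set b := ((3 * j).+1)%:R; set n := N%:R.
rewrite ltr_pdivrMr // => j_big N_gt.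
have b_ge0 : 0 <= b by rewrite ler0n.
have : n * b * g < a * g by rewrite ltr_pM2r.
have : 0 <= (n * g - 2) * b by rewrite mulr_ge0 // subr_ge0 ltW.
have -> : a * (S + g / 2) = a - a * g / 2 by rewrite /g; field.
nra.
Qed.

Section Fsum.

Variable k : nat.

Lemma tnth_fsum (x : outcome k) i :
  tnth (fsum x) i = tnth x.1.1 i (+) tnth x.1.2 i (+) tnth x.2 i.
Proof. exact: tnth_mktuple. Qed.

Lemma fsum_inj1 (x1 y1 x2 x3 : k.-tuple bool) :
  fsum (x1, x2, x3) = fsum (y1, x2, x3) -> x1 = y1.
Proof.
move=> e; apply: eq_from_tnth => i.
by move/(congr1 (fun t => tnth t i)): e; rewrite !tnth_fsum => /addIb/addIb.
Qed.

Lemma fsum_inj2 (x1 x2 y2 x3 : k.-tuple bool) :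
  fsum (x1, x2, x3) = fsum (x1, y2, x3) -> x2 = y2.
Proof.
move=> e; apply: eq_from_tnth => i.
by move/(congr1 (fun t => tnth t i)): e; rewrite !tnth_fsum => /addIb/addbI.
Qed.

Lemma fsum_inj3 (x1 x2 x3 y3 : k.-tuple bool) :
  fsum (x1, x2, x3) = fsum (x1, x2, y3) -> x3 = y3.
Proof.
move=> e; apply: eq_from_tnth => i.
by move/(congr1 (fun t => tnth t i)): e; rewrite !tnth_fsum => /addbI.
Qed.

End Fsum.

Section ZeroErrorCuts.

Variables (R : realType) (k : nat) (C : snCode k).
Hypothesis C_ok : zero_error R C.

Lemma zero_error_decodes x : dec C (Z1 C x) (Z2 C x) = fsum x.
Proof.
move/eqP: C_ok; rewrite /Pr mulf_eq0 invr_eq0 !pnatr_eq0.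
rewrite (negbTE (lt0n_neq0 (card_outcome_gt0 k))) orbF => /eqP/card0_eq/(_ x).
by rewrite inE => /negbFE/eqP.
Qed.

Lemma fsum_eq_of_messages x y : Z1 C x = Z1 C y -> Z2 C x = Z2 C y -> fsum x = fsum y.
Proof. by move=> e1 e2; rewrite -!zero_error_decodes e1 e2. Qed.

Lemma s3_cut_inj : injective (fun x : outcome k => (x.1, (Z31 C x, Z32 C x))).
Proof.
move=> [[x1 x2] x3] [[y1 y2] y3] [-> -> e31 e32]; congr (_, _).
apply: (@fsum_inj3 _ y1 y2); apply: fsum_eq_of_messages; by rewrite /Z1 /Z2 ?e31 ?e32.
Qed.

Lemma s1_cut_inj : injective (fun x : outcome k => ((x.1.2, x.2), Z1 C x)).
Proof.
move=> [[x1 x2] x3] [[y1 y2] y3] [-> -> e1]; congr (_, _, _).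
exact: (fsum_inj1 (fsum_eq_of_messages e1 _)).
Qed.

Lemma s2_cut_inj : injective (fun x : outcome k => ((x.1.1, x.2), Z2 C x)).
Proof.
move=> [[x1 x2] x3] [[y1 y2] y3] [-> -> e2]; congr (_, _, _).
exact: (fsum_inj2 (fsum_eq_of_messages _ e2)).
Qed.

End ZeroErrorCuts.

Lemma admissible_ge1 (R : realType) (R31 R32 R1 R2 : R) : admissible R31 R32 R1 R2 ->
  [/\ 1 <= R31 + R32, 1 <= R1 & 1 <= R2].
Proof.
move=> adm; split.
- apply: (@rate_ge1 R _ (fun k C => EL31 R C + EL32 R C)).
    move=> eps eps_gt0; have [K codes] := adm (eps / 2) ltac:(lra).
    exists K => k /codes [C [C_ok le31 le32 _ _]]; exists C => //; lra.
  move=> k m C C_ok budget; rewrite -ExpectD.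
  exact: (Expect_size2_ge R (s3_cut_inj C_ok) budget).
- apply: (@rate_ge1 R _ (fun k C => EL1 R C)).
    move=> eps /adm [K codes]; exists K => k /codes [C [C_ok _ _ le1 _]].
    by exists C.
  move=> k m C C_ok budget; exact: (Expect_size_ge R (s1_cut_inj C_ok) budget).
- apply: (@rate_ge1 R _ (fun k C => EL2 R C)).
    move=> eps /adm [K codes]; exists K => k /codes [C [C_ok _ _ _ le2]].
    by exists C.
  move=> k m C C_ok budget; exact: (Expect_size_ge R (s2_cut_inj C_ok) budget).
Qed.

Section SplitCode.

Variables (k c : nat).
Hypothesis c_le_k : (c <= k)%N.

(* [nth false] reads a share shorter than k as zero-padded *)
Definition mask (x : k.-tuple bool) (z : seq bool) : seq bool :=
  [seq tnth x i (+) nth false z i | i <- enum 'I_k].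

Lemma size_mask x z : size (mask x z) = k.
Proof. by rewrite size_map size_enum_ord. Qed.

Lemma nth_mask x z (i : 'I_k) : nth false (mask x z) i = tnth x i (+) nth false z i.
Proof. by rewrite (nth_map i) ?size_enum_ord // nth_ord_enum. Qed.

Definition split_code : snCode k := SNCode
  (fun x3 => take c x3) (fun x3 => drop c x3)
  (fun x1 z => mask x1 z) (fun x2 z => mask x2 (nseq c false ++ z))
  (fun z1 z2 => [tuple nth false z1 i (+) nth false z2 i | i < k]).

Lemma split_code_decodes x :
  dec split_code (Z1 split_code x) (Z2 split_code x) = fsum x.
Proof.
apply: eq_from_tnth => i; rewrite tnth_fsum tnth_mktuple !nth_mask (tnth_nth false x.2).
case: (ltnP i c) => [i_lt|i_ge].
  by rewrite nth_take // nth_cat size_nseq i_lt nth_nseq i_lt addbF addbAC.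
rewrite nth_default ?size_takel ?size_tuple //.
by rewrite nth_cat size_nseq ltnNge i_ge /= nth_drop subnKC // addbF addbA.
Qed.

Lemma split_code_zero_error (R : realType) : zero_error R split_code.
Proof.
rewrite /zero_error /Pr (_ : [set x | _] = set0) ?cards0 ?mul0r //.
by apply/setP => x; rewrite !inE split_code_decodes eqxx.
Qed.

Lemma split_code_achieves (R : realType) : (0 < k)%N ->
  achieves (R := R) split_code (c%:R / k%:R) (1 - c%:R / k%:R) 1 1.
Proof.
move=> k_gt0; have k_neq0 : k%:R != 0 :> R by rewrite pnatr_eq0 -lt0n.
split.
- rewrite /EL31 (@Expect_eq_const _ _ _ c) => [|x]; first by rewrite mulrC divfK.
  by rewrite /Z31 /= size_takel // size_tuple.
- rewrite /EL32 (@Expect_eq_const _ _ _ (k - c)) => [|x].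
    by rewrite natrB // mulrBr mulr1 mulrC divfK.
  by rewrite /Z32 /= size_drop size_tuple.
- by rewrite /EL1 (@Expect_eq_const _ _ _ k) ?mulr1 // => x; apply: size_mask.
- by rewrite /EL2 (@Expect_eq_const _ _ _ k) ?mulr1 // => x; apply: size_mask.
Qed.

End SplitCode.

Theorem mainTheorem4 (R : realType) :
  (forall R31 R32 R1 R2 : R, admissible R31 R32 R1 R2 ->
     [/\ 1 <= R31 + R32, 1 <= R1, 1 <= R2 & 1 <= (R1 + R2) / 2])
  /\
  (forall k c : nat, (0 < k)%N -> (c <= k)%N ->
     exists C : snCode k,
       zero_error R C /\
       achieves (R := R) C (c%:R / k%:R) (1 - c%:R / k%:R) 1 1).
Proof.
split=> [R31 R32 R1 R2 /admissible_ge1 [le31 le1 le2]|k c k_gt0 c_le_k].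
  by split=> //; rewrite ler_pdivlMr //; lra.
exists (split_code k c); split.
  exact: split_code_zero_error c_le_k R.
exact: split_code_achieves c_le_k R k_gt0.
Qed.
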